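(* For positive integers $f,l$ consider the hypercube Hamiltonian $H=\sum_{C}\bigl(\sum_{i\in C}S_i-M_C\bigr)^2$ with integers $M_C$ (notation as in the context), and let $n_{ze}$ be the number of zero energy assignments. (i) If $n_{ze}>0$, then the number of global minima of $H$ equals $n_{ze}$. (ii) There is an absolute constant $c>0$ such that for all positive integers $f,l$ there exists a choice of integers $(M_C)_C$ with $$n_{ze}\geq 2^N\Bigl(\frac{c}{f\sqrt{l}}\Bigr)^{n_C}.$$
   Context: Fix positive integers $f,l$ and let $N=l^f$. The variables $S_i\in\{-1,+1\}$ are indexed by vectors $i=(x_1,\dots,x_f)$ with $x_a\in\{1,\dots,l\}$. A column $C$ is specified by an index $b\in\{1,\dots,f\}$ and integers $y_a\in\{1,\dots,l\}$ for all $a\neq b$; a variable $(x_1,\dots,x_f)$ lies in $C$ iff $x_a=y_a$ for all $a\neq b$. The number of columns is $n_C=f\,l^{f-1}$. Given an integer $M_C$ for each column, $H(S)=\sum_C\bigl(\sum_{i\in C}S_i-M_C\bigr)^2$. A zero energy assignment is an $S$ with $\sum_{i\in C}S_i=M_C$ for every column $C$. A global minimum is an assignment minimizing $H$. *)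

From mathcomp Require Import all_boot all_order all_algebra.
Set Implicit Arguments. Unset Strict Implicit. Unset Printing Implicit Defensive.
Import GRing.Theory Num.Theory.

(* A variable index i = (x_1,...,x_f), coordinates in {1..l} encoded as 'I_l. *)
Definition site (f l : nat) := {ffun 'I_f -> 'I_l}.

(* A column: a direction b and values y_a for every a <> b. *)
Definition column (f l : nat) :=
  {b : 'I_f & {ffun {a : 'I_f | a != b} -> 'I_l}}.

Definition in_col (f l : nat) (C : column f l) (i : site f l) : bool :=
  [forall a : {a : 'I_f | a != tag C}, i (val a) == tagged C a].

Definition assignment (f l : nat) := {ffun site f l -> bool}.

Definition spin (b : bool) : int := if b then 1%R else (-1)%R.

Definition col_sum (f l : nat) (S : assignment f l) (C : column f l) : int :=
  (\sum_(i : site f l | in_col C i) spin (S i))%R.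

Definition H (f l : nat) (M : column f l -> int) (S : assignment f l) : int :=
  (\sum_(C : column f l) (col_sum S C - M C) ^+ 2)%R.

Definition zero_energy (f l : nat) (M : column f l -> int) (S : assignment f l) : bool :=
  [forall C : column f l, col_sum S C == M C].

Definition global_min (f l : nat) (M : column f l -> int) (S : assignment f l) : bool :=
  [forall S' : assignment f l, (H M S <= H M S')%R].

Definition n_ze (f l : nat) (M : column f l -> int) : nat :=
  #|[set S : assignment f l | zero_energy M S]|.

Definition n_min (f l : nat) (M : column f l -> int) : nat :=
  #|[set S : assignment f l | global_min M S]|.

Definition nVars (f l : nat) : nat := (l ^ f)%N.
Definition nCols (f l : nat) : nat := (f * l ^ (f - 1))%N.

From mathcomp Require Import all_boot all_order all_algebra.
From Stdlib Require Import Reals.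
From mathcomp Require Import Rstruct zify ring lra.
Import Order.TTheory GRing.Theory Num.Theory.
Set Implicit Arguments. Unset Strict Implicit. Unset Printing Implicit Defensive.

(* (i) H is a sum of squares, so it vanishes exactly at the zero energy
   assignments, and these are the global minima as soon as one exists.

   (ii) Give every assignment S the weight prod_C exp (-|x_C(S)|/sqrt l), where
   x_C(S) is the sum of the spins of the column C. Distinct spins are
   uncorrelated over all 2^N assignments, so the second moment of x_C is at
   most l; with |x|/sqrt l <= (1 + x^2/l)/2 and the convexity of exp, the total
   weight is at least 2^N e^(-n_C). Grouping the assignments by their vector of
   column sums, which ranges over [-l, l]^(n_C), bounds the total weight by
   max_M n_ze(M) * (sum_(|k| <= l) exp (-|k|/sqrt l))^(n_C)
   <= max_M n_ze(M) * (4 sqrt l)^(n_C). Hence c = 1/(4e) works, even without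
   the factor f. *)

Open Scope ring_scope.

Section ZeroEnergy.
Variables (f l : nat) (M : column f l -> int).

Lemma H_ge0 S : 0 <= H M S.
Proof. by apply: sumr_ge0 => C _; exact: sqr_ge0. Qed.

Lemma H_eq0 S : (H M S == 0) = zero_energy M S.
Proof.
apply/eqP/forallP => [H0 C | zeS].
  have := psumr_eq0P (fun C _ => sqr_ge0 (col_sum S C - M C)) H0 (i := C) isT.
  by move/eqP; rewrite sqrf_eq0 subr_eq0.
by apply: big1 => C _; rewrite (eqP (zeS C)) subrr expr0n.
Qed.

Lemma n_min_eq_n_ze : (0 < n_ze M)%nat -> n_min M = n_ze M.
Proof.
case/card_gt0P => S0; rewrite inE -H_eq0 => /eqP H_S0.
apply: eq_card => S; rewrite !inE -H_eq0.
apply/forallP/eqP => [minS | H_S S'].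
  by apply/eqP; rewrite eq_le H_ge0 andbT -H_S0 minS.
by rewrite H_S H_ge0.
Qed.

End ZeroEnergy.

Section ColumnSums.
Variables f l : nat.
Implicit Types (S : assignment f l) (C : column f l).

Lemma card_in_col_le C : (#|[pred i | in_col C i]| <= l)%nat.
Proof.
rewrite -(card_in_imset (f := fun i : site f l => i (tag C))).
  by apply: leq_trans (max_card _) _; rewrite card_ord.
move=> i j; rewrite !inE => /forallP Ci /forallP Cj ij_eq.
apply/ffunP => a; case: (eqVneq a (tag C)) => [->//|a_neq].
by move: (Ci (exist _ a a_neq)) (Cj (exist _ a a_neq)) => /eqP /= -> /eqP /= ->.
Qed.

Lemma norm_col_sum_le S C : `|col_sum S C| <= l%:R.
Proof.
apply: le_trans (ler_norm_sum _ _ _) _.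
rewrite (eq_bigr (fun=> 1)) => [|i _]; last by case: (S i).
by rewrite sumr_const ler_nat card_in_col_le.
Qed.

Definition flip_spin (i : site f l) S : assignment f l :=
  [ffun k => if k == i then ~~ S k else S k].

Lemma flip_spinK i : involutive (flip_spin i).
Proof.
by move=> S; apply/ffunP => k; rewrite !ffunE; case: eqP => // _; rewrite negbK.
Qed.

Lemma sum_spinM i j :
  \sum_(S : assignment f l) spin (S i) * spin (S j)
  = if i == j then #|{: assignment f l}|%:R else 0.
Proof.
case: eqVneq => [<-|i_neq_j].
  by rewrite (eq_bigr (fun=> 1)) ?sumr_const // => S _; case: (S i).
set s := \sum_(S : assignment f l) _; suff : s = - s by lia.
rewrite [LHS](reindex_inj (inv_inj (flip_spinK i))) -sumrN.
apply: eq_bigr => S _; rewrite !ffunE eqxx eq_sym (negbTE i_neq_j).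
by case: (S i); case: (S j).
Qed.

Lemma sum_col_sum_sqr C :
  \sum_(S : assignment f l) col_sum S C ^+ 2
  = (#|[pred i | in_col C i]| * #|{: assignment f l}|)%:R.
Proof.
under eq_bigr do rewrite expr2 /col_sum big_distrlr /=.
rewrite exchange_big /=; under eq_bigr do rewrite exchange_big /=.
under eq_bigr => i _ do under eq_bigr do rewrite sum_spinM.
transitivity (\sum_(i | in_col C i) #|{: assignment f l}|%:R : int).
  apply: eq_bigr => i Ci.
  rewrite (bigD1 i) //= eqxx big1 ?addr0 // => j /andP [_ j_neq_i].
  by rewrite eq_sym (negbTE j_neq_i).
by rewrite sumr_const [in RHS]mulnC natrM mulr_natr.
Qed.

Lemma sum_col_sum_sqr_le (R : numDomainType) C :
  \sum_(S : assignment f l) ((col_sum S C)%:~R : R) ^+ 2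
  <= (l * #|{: assignment f l}|)%:R.
Proof.
under eq_bigr do rewrite -rmorphXn.
rewrite -rmorph_sum sum_col_sum_sqr /= mulrz_nat ler_nat.
by rewrite leq_mul2r card_in_col_le orbT.
Qed.

(* A column sum lies in [-l, l] and is stored as an element k of 'I_(2 l + 1),
   standing for k - l. *)
Definition centered (k : 'I_(2 * l).+1) : int := k%:Z - l%:Z.

Definition col_sums_ord S : {ffun column f l -> 'I_(2 * l).+1} :=
  [ffun C => inord (absz (col_sum S C + l%:Z))].

Lemma centered_col_sums_ord S C : centered (col_sums_ord S C) = col_sum S C.
Proof.
have := norm_col_sum_le S C; rewrite /centered ffunE => col_sum_bound.
rewrite inordK; lia.
Qed.

Lemma card_col_sums_fibre_le (m : {ffun column f l -> 'I_(2 * l).+1}) :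
  (#|[set S | col_sums_ord S == m]| <= n_ze (fun C => centered (m C)))%nat.
Proof.
apply: subset_leq_card; apply/subsetP => S; rewrite !inE => /eqP <-.
by apply/forallP => C; rewrite centered_col_sums_ord.
Qed.

End ColumnSums.

Lemma sum_prod_le_max_fibre (A I K : finType) (R : numDomainType)
    (g : A -> {ffun I -> K}) (w : K -> R) : (forall k, 0 <= w k) ->
  \sum_(a : A) \prod_(i : I) w (g a i) <=
  (\max_(m : {ffun I -> K}) #|[set a | g a == m]|)%nat%:R
  * \prod_(i : I) \sum_(k : K) w k.
Proof.
move=> w_ge0.
rewrite (partition_big g xpredT) //= bigA_distr_bigA mulr_sumr.
apply: ler_sum => m _.
rewrite (eq_bigr (fun=> \prod_i w (m i))); last by move=> a /eqP ->.
rewrite sumr_const -[X in X <= _]mulr_natl ler_wpM2r ?prodr_ge0 // ler_nat.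
by apply: leq_trans (leq_bigmax m); rewrite cardsE.
Qed.

Lemma sum_geom_le (R : realFieldType) (r : R) n :
  0 <= r < 1 -> \sum_(i < n) r ^+ i <= (1 - r)^-1.
Proof.
case/andP => r_ge0 r_lt1; have r1_gt0 : 0 < 1 - r by lra.
have geom : (1 - r) * \sum_(i < n) r ^+ i = 1 - r ^+ n.
  by move: (subrX1 r n); rewrite !mulrBl !mul1r; lra.
by rewrite -(ler_pM2l r1_gt0) geom mulfV ?gt_eqF // gerBl exprn_ge0.
Qed.

Lemma sum_pow_centered_le (R : realFieldType) (r : R) l :
  0 <= r < 1 -> \sum_(k < (2 * l).+1) r ^+ absz (centered k) <= 2 * (1 - r)^-1.
Proof.
move=> r_bounds; have [r_ge0 r_lt1] := andP r_bounds.
rewrite -(big_mkord xpredT (fun k => r ^+ absz (k%:Z - l%:Z))).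
rewrite (big_cat_nat _ (n := l.+1)) //=; last by lia.
have -> : \sum_(0 <= k < l.+1) r ^+ absz (k%:Z - l%:Z) = \sum_(k < l.+1) r ^+ k.
  rewrite big_nat_rev big_mkord; apply: eq_bigr => k _.
  by congr (_ ^+ _); have := ltn_ord k; lia.
rewrite [X in _ + X](_ : _ =
  \sum_(0 + l.+1 <= i < (2 * l).+1) r ^+ absz (i%:Z - l%:Z)) //.
rewrite big_addn big_mkord.
have right_le : \sum_(i < (2 * l).+1 - l.+1) r ^+ absz ((i + l.+1)%:Z - l%:Z)
                <= \sum_(i < (2 * l).+1 - l.+1) r ^+ i.
  apply: ler_sum => i _; rewrite (_ : absz _ = i.+1); last by lia.
  by rewrite exprS ler_piMl ?exprn_ge0 // ltW.
have := sum_geom_le l.+1 r_bounds; have := sum_geom_le ((2 * l).+1 - l.+1) r_bounds.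
lra.
Qed.

Lemma norm_div_le (R : realFieldType) (x s : R) :
  0 < s -> `|x| / s <= (1 + x ^+ 2 / s ^+ 2) / 2.
Proof.
move=> s_gt0; rewrite -real_normK ?num_real // -expr_div_n.
have := sqr_ge0 (`|x| / s - 1); rewrite !expr2; nra.
Qed.

#[local] Arguments exp x%_ring_scope.

Lemma exp_ge1D (x : R) : 1 + x <= exp x.
Proof. by apply/RleP; exact: exp_ineq1_le. Qed.

Lemma exp_gt0 (x : R) : 0 < exp x.
Proof. by apply/RltP; exact: exp_pos. Qed.

Lemma exp_sum (I : finType) (F : I -> R) : exp (\sum_i F i) = \prod_i exp (F i).
Proof. by apply: (big_morph exp (fun x y => esym (expRD x y))); exact: expR0. Qed.

(* The tangent line of exp at -a. *)
Lemma jensen_exp (I : finType) (Y : I -> R) (a : R) :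
  - (#|I|%:R * a) <= \sum_i Y i -> #|I|%:R * exp (- a) <= \sum_i exp (Y i).
Proof.
move=> sumY_ge.
have split_exp i : exp (Y i) = exp (- a) * exp (Y i + a).
  by rewrite expRD RplusE; congr exp; lra.
under eq_bigr do rewrite split_exp.
rewrite -mulr_sumr mulrC ler_pM2l ?exp_gt0 //.
apply: le_trans (ler_sum _ (fun i _ => exp_ge1D (Y i + a))).
rewrite !big_split /= !sumr_const -mulr_natl; lra.
Qed.

Lemma inv_1_sub_expNV_le (s : R) : 0 < s -> (1 - exp (- s^-1))^-1 <= s + 1.
Proof.
move=> s_gt0; have sV_gt0 : 0 < s^-1 by rewrite invr_gt0.
have e_ge : 1 + s^-1 <= exp s^-1 := exp_ge1D _.
rewrite exp_Ropp; set e := exp s^-1 in e_ge *.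
have e_gt0 : 0 < e by lra.
have -> : 1 - e^-1 = (e - 1) / e by rewrite mulrBl mulfV ?mul1r ?lt0r_neq0.
rewrite invf_div ler_pdivrMr; last by lra.
have : 0 <= s * (e - 1 - s^-1) by rewrite mulr_ge0 //; lra.
by rewrite !mulrBr mulfV ?gt_eqF //; lra.
Qed.

Lemma sum_exp_centered_le l (s : R) :
  1 <= s -> \sum_(k < (2 * l).+1) exp (- (`|(centered k)%:~R| / s)) <= 4%:R * s.
Proof.
move=> s_ge1; have s_gt0 : 0 < s by lra.
have r_bounds : 0 <= exp (- s^-1) < 1.
  rewrite ltW ?exp_gt0 //= exp_Ropp invf_lt1 ?exp_gt0 //.
  by have := exp_ge1D s^-1; rewrite -invr_gt0 in s_gt0; lra.
have exp_norm (z : int) : exp (- (`|z%:~R| / s)) = exp (- s^-1) ^+ absz z.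
  by rewrite -intr_norm -abszE expRX mulNrn -mulr_natl.
under eq_bigr do rewrite exp_norm.
apply: le_trans (sum_pow_centered_le l r_bounds) _.
by have := inv_1_sub_expNV_le s_gt0; lra.
Qed.

Definition weight f l (s : R) (S : assignment f l) : R :=
  \prod_(C : column f l) exp (- (`|(col_sum S C)%:~R| / s)).

Section Weights.
Variables (f l : nat).
Hypothesis l_gt0 : (0 < l)%nat.
Let s : R := Num.sqrt l%:R.

Let s_ge1 : 1 <= s.
Proof. by rewrite -sqrtr1 ler_sqrt ?ler0n // ler1n. Qed.

Let s_gt0 : 0 < s.
Proof. exact: lt_le_trans ltr01 s_ge1. Qed.

Lemma sum_norm_col_sum_le (C : column f l) :
  \sum_(S : assignment f l) `|(col_sum S C)%:~R| / s <= #|{: assignment f l}|%:R.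
Proof.
have s_sqr : s ^+ 2 = l%:R by rewrite sqr_sqrtr // ler0n.
apply: le_trans (ler_sum _ (fun S _ => norm_div_le (col_sum S C)%:~R s_gt0)) _.
rewrite -mulr_suml big_split /= sumr_const -mulr_suml s_sqr.
have : (\sum_(S : assignment f l) ((col_sum S C)%:~R : R) ^+ 2) / l%:R
         <= #|{: assignment f l}|%:R.
  by rewrite ler_pdivrMr ?ltr0n // mulrC -natrM sum_col_sum_sqr_le.
lra.
Qed.

Lemma sum_weight_ge :
  #|{: assignment f l}|%:R * exp (- #|{: column f l}|%:R)
  <= \sum_(S : assignment f l) weight s S.
Proof.
under eq_bigr do rewrite /weight -exp_sum.
apply: jensen_exp; rewrite exchange_big /=.
under eq_bigr do rewrite sumrN.
rewrite sumrN lerN2 mulr_natr -sumr_const.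
by apply: ler_sum => C _; exact: sum_norm_col_sum_le.
Qed.

Lemma sum_weight_le : exists M : column f l -> int,
  \sum_(S : assignment f l) weight s S <= (n_ze M)%:R * (4%:R * s) ^+ #|{: column f l}|.
Proof.
pose n_fibre (m : {ffun column f l -> 'I_(2 * l).+1}) :=
  #|[set S : assignment f l | col_sums_ord S == m]|.
have [m _ max_m] : {m | true & (\max_m' n_fibre m')%nat = n_fibre m}.
  by apply: eq_bigmax => //; exact: [ffun=> ord0].
exists (fun C => centered (m C)).
pose w (k : 'I_(2 * l).+1) := exp (- (`|(centered k)%:~R| / s)).
have w_ge0 k : 0 <= w k by exact/ltW/exp_gt0.
have weight_le : \sum_(S : assignment f l) weight s S
                 <= (n_fibre m)%:R * \prod_(C : column f l) \sum_k w k.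
  rewrite -max_m.
  rewrite (eq_bigr (fun S => \prod_(C : column f l) w (col_sums_ord S C))) => [|S _].
    exact: sum_prod_le_max_fibre.
  by apply: eq_bigr => C _; rewrite /w centered_col_sums_ord.
apply: le_trans weight_le _.
apply: ler_pM; rewrite ?prodr_ge0 ?ler_nat ?card_col_sums_fibre_le //.
  by move=> C _; exact: sumr_ge0.
rewrite prodr_const lerXn2r ?nnegrE ?sumr_ge0 ?sum_exp_centered_le //.
by rewrite mulr_ge0 ?ltW.
Qed.

Lemma exists_n_ze_ge : exists M : column f l -> int,
  #|{: assignment f l}|%:R * (exp (-1) / (4%:R * s)) ^+ #|{: column f l}| <= (n_ze M)%:R.
Proof.
have [M weight_le] := sum_weight_le; exists M.
have s4_pos : 0 < (4%:R * s) ^+ #|{: column f l}| by rewrite exprn_gt0 ?mulr_gt0.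
rewrite expr_div_n mulrA ler_pdivrMr // expRX mulNrn.
by apply: le_trans weight_le; exact: sum_weight_ge.
Qed.

End Weights.

Lemma card_assignment f l : #|{: assignment f l}| = expn 2 (nVars f l).
Proof. by rewrite card_ffun card_bool card_ffun !card_ord. Qed.

Lemma card_column f l : #|{: column f l}| = nCols f l.
Proof.
rewrite /nCols card_tagged sumnE big_map big_enum /=.
rewrite (eq_bigr (fun=> expn l (f - 1))) ?sum_nat_const ?card_ord // => b _.
by rewrite card_ffun card_ord card_sig cardC1 card_ord subn1.
Qed.

Definition c_bound : R := exp (-1) / 4%:R.

Lemma c_bound_gt0 : 0 < c_bound.
Proof. by rewrite divr_gt0 ?exp_gt0 ?ltr0n. Qed.

Lemma n_ze_lower_bound f l : (0 < f)%nat -> (0 < l)%nat -> exists M : column f l -> int,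
  2%:R ^+ nVars f l * (c_bound / (f%:R * Num.sqrt l%:R)) ^+ nCols f l <= (n_ze M)%:R.
Proof.
move=> f_gt0 l_gt0; have [M n_ze_M] := exists_n_ze_ge f l_gt0; exists M.
apply: le_trans n_ze_M.
rewrite card_assignment natrX card_column ler_wpM2l ?exprn_ge0 //.
have s_gt0 : 0 < Num.sqrt (l%:R : R) by rewrite sqrtr_gt0 ltr0n.
have f_ge1 : 1 <= (f%:R : R) by rewrite ler1n.
have c_gt0 := c_bound_gt0.
apply: lerXn2r; rewrite ?nnegrE.
- exact: divr_ge0 (ltW c_gt0) (mulr_ge0 (ler0n _ f) (ltW s_gt0)).
- exact: divr_ge0 (ltW (exp_gt0 _)) (mulr_ge0 (ler0n _ 4) (ltW s_gt0)).
rewrite /c_bound -mulrA -invfM ler_pM2l ?exp_gt0 // lef_pV2 ?posrE ?mulr_gt0 ?ltr0n //.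
by rewrite ler_wpM2l ?ler0n // ler_peMl // ltW.
Qed.

Close Scope ring_scope.

Theorem mainTheorem3 :
  (forall (f l : nat), (0 < f)%N -> (0 < l)%N ->
     forall M : column f l -> int,
       (0 < n_ze M)%N -> n_min M = n_ze M)
  /\
  (exists c : R, (0 < c)%R /\
     forall (f l : nat), (0 < f)%N -> (0 < l)%N ->
       exists M : column f l -> int,
         (pow 2 (nVars f l) * pow (c / (INR f * sqrt (INR l))) (nCols f l)
            <= INR (n_ze M))%R).
Proof.
split=> [f l _ _ M|]; first exact: n_min_eq_n_ze.
exists c_bound; split; first exact/RltP/c_bound_gt0.
move=> f l f_gt0 l_gt0; have [M bound] := n_ze_lower_bound f_gt0 l_gt0.
exists M; apply/RleP.
by rewrite !RpowE !INRE RsqrtE RdivE !RmultE IZRposE INRE.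
Qed.
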